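(* Let $K=\mathbb{R}$ and assume $\tau_{(i)}>0$, $\eta_{(i)}>-1$, $\eta_{(i)}\neq0$ for all $i\in\Omega$, where $|\Omega|=n$. Let $\Theta=\{\pi(\Omega,M)\mid M\in\mathcal{I}(\overline{\mathbf{P}})\}$. Then $|\Theta|\geqslant n+1$, and the following are equivalent: (1) $|\Theta|=n+1$; (2) for any $C,D\in\mathcal{I}(\overline{\mathbf{P}})$, $|C|=|D|$ implies $\pi(\Omega,C)=\pi(\Omega,D)$; (3) for any $C,D\in\mathcal{I}(\overline{\mathbf{P}})$, $\pi(\Omega,C)=\pi(\Omega,D)$ if and only if $|C|=|D|$; (4) $\mathbf{P}$ is hierarchical, and for any $u,v\in\Omega$ with $\mathrm{len}(u)=\mathrm{len}(v)$ we have $\eta_{(u)}=\eta_{(v)}$.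
   Context: $\Omega$ is a finite set and $\mathbf{P}=(\Omega,\preccurlyeq_{\mathbf{P}})$ a poset; $\overline{\mathbf{P}}$ is the dual poset and $\mathcal{I}(\overline{\mathbf{P}})$ its set of ideals (up-closed subsets of $\mathbf{P}$). For $Y\subseteq\Omega$: $\max(Y)$ is the set of maximal elements of $Y$ w.r.t. $\preccurlyeq_{\mathbf{P}}$; $\mathcal{I}(Y)$ is the set of down-closed subsets of $Y$. $\tau,\eta\in\mathbb{R}^{\Omega}$. For $D,I\subseteq\Omega$, $\varphi(D,I)=(-1)^{|I\cap D|}\big(\prod_{i\in I-\max(I)}\tau_{(i)}\big)\big(\prod_{i\in\max(I)-D}\eta_{(i)}\big)$ if $I\cap D\subseteq\max(I)$, and $0$ otherwise; for $D\subseteq Y\subseteq\Omega$, $\pi(Y,D)=\sum_{I\in\mathcal{I}(Y)}\varphi(D,I)x^{|I|}\in\mathbb{R}[x]$. $\mathrm{len}(y)$ is the largest cardinality of a chain in $\mathbf{P}$ with greatest element $y$; $\mathbf{P}$ is hierarchical if $\mathrm{len}(u)+1\leqslant\mathrm{len}(v)$ implies $u\preccurlyeq_{\mathbf{P}}v$. *)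

From HB Require Import structures.
From mathcomp Require Import all_boot all_order all_algebra.
Set Implicit Arguments. Unset Strict Implicit. Unset Printing Implicit Defensive.
Import Order.TTheory GRing.Theory Num.Theory.

Local Open Scope ring_scope.

Section Defs.
(* Omega is the finite carrier T of a finite poset P. *)
Context (d : Order.disp_t) (T : finPOrderType d).

Definition maxset (Y : {set T}) : {set T} :=
  [set y in Y | [forall z in Y, (y <= z)%O ==> (z == y)]].

(* ideals of the dual poset: up-closed subsets of P *)
Definition upclosed (M : {set T}) : bool :=
  [forall x in M, forall y, (x <= y)%O ==> (y \in M)].

Definition downclosed_in (Y I : {set T}) : bool :=
  (I \subset Y) && [forall x in I, forall y in Y, (y <= x)%O ==> (y \in I)].

Variables (R : realFieldType) (tau eta : T -> R).

Definition phi (D I : {set T}) : R :=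
  if I :&: D \subset maxset I then
    (-1) ^+ #|I :&: D| * (\prod_(i in I :\: maxset I) tau i)
                       * (\prod_(i in maxset I :\: D) eta i)
  else 0.

Definition pi_poly (Y D : {set T}) : {poly R} :=
  \sum_(I : {set T} | downclosed_in Y I) phi D I *: 'X^#|I|.

Definition Theta : seq {poly R} :=
  undup [seq pi_poly setT M | M <- enum [pred M : {set T} | upclosed M]].

End Defs.

Section Len.
Context (d : Order.disp_t) (T : finPOrderType d).

Definition is_chain (C : {set T}) : bool :=
  [forall x in C, forall y in C, (x <= y)%O || (y <= x)%O].

Definition len (y : T) : nat :=
  \max_(C : {set T} | is_chain C && (y \in C) && [forall z in C, (z <= y)%O]) #|C|.

Definition hierarchical : Prop :=
  forall u v : T, (len u + 1 <= len v)%N -> (u <= v)%O.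
End Len.

(* If X is an up-set and m is not in X, the lowest nonzero coefficient of
   pi(X) - pi(X + m) sits in degree |down m| and equals
   (1 + eta m) * prod_(i < m) tau i > 0.  So pi strictly decreases, for the
   lexicographic order on coefficients starting from the constant term, along
   every maximal chain of up-sets: this gives |Theta| >= n + 1, and when
   |Theta| = n + 1 exactly n - |C| elements of Theta lie below pi(C), so pi(C)
   and |C| determine each other.  If pi(C) depends only on |C|, comparing these
   lowest terms for two one-point extensions of up-sets of equal size shows that
   |down m| and eta m depend only on len m, i.e. P is hierarchical and eta is
   constant on levels.  Conversely, in that case every len-preserving
   permutation is an automorphism of P fixing the non-maximal part of each
   down-set, so it leaves pi invariant, and transpositions of elements of equal
   len connect any two up-sets of equal size. *)

From Pilot Require Import Defs.
From HB Require Import structures.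
From mathcomp Require Import all_boot all_order all_algebra perm zify ring.
Import Order.TTheory GRing.Theory Num.Theory.
Set Implicit Arguments. Unset Strict Implicit. Unset Printing Implicit Defensive.

Section UpSets.
Context (d : Order.disp_t) (T : finPOrderType d).
Implicit Types (u v w x y z m : T) (A B C I X : {set T}).

Lemma upclosedP X :
  reflect (forall x y, x \in X -> (x <= y)%O -> y \in X) (upclosed X).
Proof.
apply: (iffP forall_inP) => [uX x y /uX/forallP/(_ y)/implyP//|uX x Xx].
by apply/forallP=> y; apply/implyP; apply: uX.
Qed.

Lemma downclosedP I :
  reflect (forall x y, x \in I -> (y <= x)%O -> y \in I) (downclosed_in setT I).
Proof.
rewrite /downclosed_in subsetT.
apply: (iffP forall_inP) => [dI x y /dI/forall_inP/(_ y (in_setT y))/implyP//|dI x Ix].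
by apply/forall_inP=> y _; apply/implyP; apply: dI.
Qed.

Lemma upclosed0 : upclosed (set0 : {set T}).
Proof. by apply/upclosedP=> x y; rewrite inE. Qed.

Lemma upclosedT : upclosed [set: T].
Proof. by apply/upclosedP=> x y; rewrite inE. Qed.

Definition chain_below y C := is_chain C && (y \in C) && [forall z in C, (z <= y)%O].

Lemma is_chainP C :
  reflect {in C &, forall x y, (x <= y)%O || (y <= x)%O} (is_chain C).
Proof.
apply: (iffP forall_inP) => [ch x y /ch/forall_inP ch_x /ch_x //|ch x Cx].
by apply/forall_inP=> y Cy; apply: ch.
Qed.

Lemma chain_below1 y : chain_below y [set y].
Proof.
rewrite /chain_below set11 andbT; apply/andP; split.
  by apply/is_chainP=> a b /set1P-> /set1P->; rewrite lexx.
by apply/forall_inP=> z /set1P->.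
Qed.

Lemma len_max y C : chain_below y C -> #|C| <= len y.
Proof. exact: leq_bigmax_cond. Qed.

Lemma len_witness y : exists2 C, chain_below y C & #|C| = len y.
Proof.
have [|C yC max_C] := @eq_bigmax_cond _ (chain_below y) (fun C => #|C|).
  by apply/card_gt0P; exists [set y]; exact: chain_below1.
by exists C; last exact/esym.
Qed.

Lemma len_gt0 y : 0 < len y.
Proof. by rewrite -(cards1 y) len_max ?chain_below1. Qed.

Lemma len_lt x y : (x < y)%O -> len x < len y.
Proof.
move=> xy; have [C /andP[/andP[/is_chainP chC Cx] /forall_inP C_le_x] <-] := len_witness x.
have C_le_y z : z \in C -> (z <= y)%O by move/C_le_x/le_trans; apply; apply: ltW.
have yNC : y \notin C by apply/negP=> /C_le_x; rewrite lt_geF.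
suff: chain_below y (y |: C) by move/len_max; rewrite cardsU1 yNC.
rewrite /chain_below setU11 andbT.
apply/andP; split; last by apply/forall_inP=> z /setU1P[->|/C_le_y].
apply/is_chainP=> a b /setU1P[->|Ca] /setU1P[->|Cb]; rewrite ?lexx //.
- by rewrite C_le_y ?orbT.
- by rewrite C_le_y.
- exact: chC.
Qed.

Lemma len_le x y : (x <= y)%O -> len x <= len y.
Proof. by rewrite le_eqVlt => /orP[/eqP->//|/len_lt/ltnW]. Qed.

Lemma len_cover v : 1 < len v -> exists2 w, (w < v)%O & (len w).+1 = len v.
Proof.
move=> len_v_gt1.
have [C /andP[/andP[/is_chainP chC Cv] /forall_inP C_le_v] cardC] := len_witness v.
have cardCv : (#|C :\ v|).+1 = len v by rewrite -cardC (cardsD1 v C) Cv.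
have [a Ca] : exists a, a \in C :\ v by apply/card_gt0P; rewrite -ltnS cardCv.
case: (arg_maxnP (@len _ T) Ca) => w /setD1P[wNv Cw] w_max.
have wv : (w < v)%O by rewrite lt_neqAle wNv C_le_v.
exists w => //; apply/eqP; rewrite eqn_leq len_lt //= -cardCv ltnS len_max //.
rewrite /chain_below in_setD1 wNv Cw /= andbT; apply/andP; split.
  by apply/is_chainP=> a' b' /setD1P[_ Ca'] /setD1P[_ Cb']; apply: chC.
apply/forall_inP=> z zCv; have /setD1P[_ Cz] := zCv.
case/orP: (chC z w Cz Cw) => //; rewrite le_eqVlt => /orP[/eqP->//|wz].
by have := w_max z zCv; rewrite /= leqNgt len_lt.
Qed.

Lemma hier_ltE (hT : hierarchical T) x y : (x < y)%O = (len x < len y).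
Proof.
apply/idP/idP=> [/len_lt//|lxy].
rewrite lt_neqAle hT ?addn1 // andbT.
by apply: contraTneq lxy => ->; rewrite ltnn.
Qed.

Lemma hier_leE (hT : hierarchical T) x y : (x <= y)%O = (x == y) || (len x < len y).
Proof. by rewrite le_eqVlt hier_ltE. Qed.

Definition downset m : {set T} := [set z | (z <= m)%O].

Lemma maxset_downset m : Defs.maxset (downset m) = [set m].
Proof.
apply/setP=> y; rewrite !inE; apply/andP/eqP=> [[ym /forall_inP max_y]|->].
  by apply/eqP; rewrite eq_sym; apply: (implyP (max_y m _)); rewrite ?inE.
by split=> //; apply/forall_inP=> z /[!inE] zm; apply/implyP=> mz; rewrite eq_le zm mz.
Qed.

Lemma downset_sub m I : downclosed_in setT I -> m \in I -> downset m \subset I.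
Proof. by move=> /downclosedP dI mI; apply/subsetP=> z /[!inE]; apply: dI. Qed.

Lemma downclosed_downset m : downclosed_in setT (downset m).
Proof. by apply/downclosedP=> a b /[!inE] am /le_trans; apply. Qed.

Lemma upclosedC_downset m : upclosed (~: downset m).
Proof. by apply/upclosedP=> x y /[!inE] xNm xy; apply: contra xNm; apply: le_trans. Qed.

Lemma upclosedI A B : upclosed A -> upclosed B -> upclosed (A :&: B).
Proof.
move=> /upclosedP uA /upclosedP uB; apply/upclosedP=> x y /setIP[Ax Bx] xy.
by rewrite inE (uA x y Ax xy) (uB x y Bx xy).
Qed.

Lemma upclosed_setU1 X m :
  upclosed X -> (forall y, (m < y)%O -> y \in X) -> upclosed (m |: X).
Proof.
move=> /upclosedP uX above_m; apply/upclosedP=> x y /setU1P[->|Xx] xy; last first.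
  by rewrite !inE (uX x y Xx xy) orbT.
by rewrite !inE; case: (eqVneq y m) => //= yNm; apply: above_m; rewrite lt_neqAle eq_sym yNm.
Qed.

Lemma upclosed_setD1 X m :
  upclosed X -> (forall y, y \in X -> ~~ (y < m)%O) -> upclosed (X :\ m).
Proof.
move=> /upclosedP uX min_m; apply/upclosedP=> x y /setD1P[xNm Xx] xy.
rewrite in_setD1 (uX x y Xx xy) andbT; apply: contraTneq (min_m x Xx) => ym.
by rewrite negbK lt_neqAle xNm -ym.
Qed.

Lemma upclosed_exchange X w : upclosed X -> w \notin X ->
  (forall y, (w < y)%O -> y \in X) -> (exists2 a, a \in X & ~~ (w <= a)%O) ->
  exists2 z, z \in X & upclosed (X :\ z) /\ upclosed (w |: X :\ z).
Proof.
move=> uX wNX above_w [a Xa wNa].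
have Sa : a \in [set y in X | ~~ (w <= y)%O] by rewrite inE Xa.
case: (arg_minnP (@len _ T) Sa) => z /setIdP[Xz wNz] z_min.
have z_minimal y : y \in X -> ~~ (y < z)%O.
  move=> Xy; apply/negP=> yz; have Sy : y \in [set y in X | ~~ (w <= y)%O].
    by rewrite inE Xy; apply: contra wNz => /le_trans; apply; apply: ltW.
  by have := z_min y Sy; rewrite /= leqNgt len_lt.
exists z => //; split; first exact: upclosed_setD1.
apply: upclosed_setU1 (upclosed_setD1 uX z_minimal) _ => y wy.
rewrite in_setD1 above_w // andbT; apply: contraNneq wNz => <-.
exact: ltW.
Qed.

(* Listing [B :\: A] by decreasing [len] makes [A] plus any prefix an up-set. *)
Definition upchain A B i : {set T} :=
  A :|: [set x in take i (sort (fun x y => len y <= len x) (enum (B :\: A)))].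

Section UpChain.
Variables A B : {set T}.
Let s := sort (fun x y : T => len y <= len x) (enum (B :\: A)).

Let mem_s x : (x \in s) = (x \in B :\: A).
Proof. by rewrite mem_sort mem_enum. Qed.

Let size_s : size s = #|B :\: A|.
Proof. by rewrite size_sort cardE. Qed.

Let uniq_s : uniq s.
Proof. by rewrite sort_uniq enum_uniq. Qed.

Let pairwise_s : pairwise (fun x y => len y <= len x) s.
Proof.
rewrite -sorted_pairwise; last by move=> x y z /[swap]; apply: leq_trans.
by apply: sort_sorted => x y; apply: leq_total.
Qed.

Lemma upchain_upclosed i : upclosed A -> upclosed B -> upclosed (upchain A B i).
Proof.
move=> /upclosedP uA /upclosedP uB; apply/upclosedP=> x y.
rewrite /upchain -/s !inE => /orP[/uA Ay /Ay->//|x_take] xy.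
have /[!mem_s] /setDP[Bx _] := mem_take x_take.
case Ay: (y \in A) => //=; case: (eqVneq x y) => [<-//|xNy].
have y_s : y \in s by rewrite mem_s inE Ay (uB x).
have lt_xy : len x < len y by apply: len_lt; rewrite lt_neqAle xNy.
apply: contraTT lt_xy => y_take; rewrite -leqNgt.
move: y_s pairwise_s; rewrite -(cat_take_drop i s) mem_cat (negPf y_take).
by rewrite pairwise_cat => y_drop /and3P[/allrelP/(_ x y x_take y_drop)].
Qed.

Lemma card_upchain i : i <= #|B :\: A| -> #|upchain A B i| = #|A| + i.
Proof.
move=> le_i; rewrite /upchain -/s cardsU.
have take_sub : {subset take i s <= B :\: A} by move=> x /mem_take; rewrite mem_s.
have -> : A :&: [set x in take i s] = set0.
  by apply/setP=> x; rewrite !inE; apply/andP=> -[Ax /take_sub/setDP[_]]; rewrite Ax.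
rewrite cards0 subn0 cardsE.
by rewrite (card_uniqP (take_uniq i uniq_s)) size_takel ?size_s.
Qed.

Lemma upchain0 : upchain A B 0 = A.
Proof. by apply/setP=> x; rewrite /upchain take0 !inE orbF. Qed.

Lemma upchain_full : A \subset B -> upchain A B #|B :\: A| = B.
Proof.
move=> AB; apply/setP=> x; rewrite /upchain -/s -size_s take_size !inE mem_s inE.
by case: (boolP (x \in A)) => //= /(subsetP AB).
Qed.

Lemma upchainS i : i < #|B :\: A| ->
  exists2 m, m \notin upchain A B i & upchain A B i.+1 = m |: upchain A B i.
Proof.
move=> lt_i; have [x0 _] : exists x0, x0 \in B :\: A by apply/card_gt0P; lia.
rewrite -size_s in lt_i; have take_iS := take_nth x0 lt_i.
exists (nth x0 s i); last first.
  by apply/setP=> x; rewrite /upchain -/s take_iS !inE mem_rcons in_cons orbCA.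
have := take_uniq i.+1 uniq_s; rewrite take_iS rcons_uniq /upchain -/s !inE.
move=> /andP[/negPf-> _]; rewrite orbF.
by have /[!mem_s] /setDP[] := mem_nth x0 lt_i.
Qed.
End UpChain.
End UpSets.

Section LexOrder.
Variable R : realDomainType.
Implicit Types (p q r : {poly R}) (t : seq {poly R}).
Local Open Scope ring_scope.

Definition lex_lt p q : bool :=
  [exists k : 'I_(maxn (size p) (size q)),
     [forall i : 'I_k, p`_i == q`_i] && (p`_k < q`_k)].

Lemma lex_ltP p q :
  reflect (exists k, (forall i, (i < k)%N -> p`_i = q`_i) /\ p`_k < q`_k) (lex_lt p q).
Proof.
apply: (iffP existsP) => [[k /andP[/forallP eq_k lt_k]]|[k [eq_k lt_k]]].
  by exists k; split=> // i lt_ik; apply/eqP/(eq_k (Ordinal lt_ik)).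
have lt_k_size : (k < maxn (size p) (size q))%N.
  rewrite ltnNge; apply: contraTN lt_k; rewrite geq_max => /andP[p_k q_k].
  by rewrite !nth_default // ltxx.
exists (Ordinal lt_k_size); rewrite lt_k andbT.
by apply/forallP=> i; rewrite eq_k.
Qed.

Lemma lex_lt_irr : irreflexive lex_lt.
Proof. by move=> p; apply/lex_ltP=> -[k [_]]; rewrite ltxx. Qed.

Lemma lex_lt_trans : transitive lex_lt.
Proof.
move=> q p r /lex_ltP[k1 [eq1 lt1]] /lex_ltP[k2 [eq2 lt2]]; apply/lex_ltP.
exists (minn k1 k2); split=> [i|].
  by rewrite leq_min => /andP[/eq1-> /eq2->].
case: ltngtP => [lt_k|lt_k|eq_k].
- by rewrite -(eq2 _ lt_k).
- by rewrite (eq1 _ lt_k).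
- by rewrite eq_k in lt1 *; apply: lt_trans lt2.
Qed.

Lemma lex_lt_asym p q : lex_lt p q -> lex_lt q p = false.
Proof. by move=> pq; apply/negbTE/negP=> /(lex_lt_trans pq); rewrite lex_lt_irr. Qed.

Lemma lex_lt_total p q : p != q -> lex_lt p q || lex_lt q p.
Proof.
move=> neq_pq.
have /existsP[k kP] : [exists k : 'I_(maxn (size p) (size q)), p`_k != q`_k].
  apply: contraNT neq_pq => /existsPn eq_pq; apply/eqP/polyP=> k.
  case: (ltnP k (maxn (size p) (size q))) => [lt_k|].
    exact/eqP/negPn/(eq_pq (Ordinal lt_k)).
  by rewrite geq_max => /andP[p_k q_k]; rewrite !nth_default.
case: (ex_minnP (ex_intro (fun k => p`_k != q`_k) (val k) kP)) => {k kP} k neq_k min_k.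
have eq_k i : (i < k)%N -> p`_i = q`_i.
  by move=> lt_ik; apply/eqP; apply: contraTT lt_ik => /min_k; rewrite -leqNgt.
case: (ltgtP p`_k q`_k) neq_k => [lt_k|lt_k|//] _.
  by apply/orP; left; apply/lex_ltP; exists k.
by apply/orP; right; apply/lex_ltP; exists k; split=> // i /eq_k.
Qed.

Lemma lex_chain_leq_size (F : nat -> {poly R}) k t :
  (forall i j, (i < j < k)%N -> lex_lt (F j) (F i)) ->
  (forall i, (i < k)%N -> F i \in t) -> (k <= size t)%N.
Proof.
move=> F_decr F_t; rewrite -(size_iota 0 k) -(size_map F).
apply: (@uniq_leq_size _ [seq F i | i <- iota 0 k]); last first.
  by move=> _ /mapP[i /[!mem_iota] /andP[_ /F_t ? ->]].
rewrite map_inj_in_uniq ?iota_uniq // => i j /[!mem_iota] /andP[_ lt_ik] /andP[_ lt_jk].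
move=> eq_F; case: (ltngtP i j) => // [lt_ij|lt_ji].
  by have := F_decr i j; rewrite lt_ij lt_jk eq_F lex_lt_irr => /(_ isT).
by have := F_decr j i; rewrite lt_ji lt_ik eq_F lex_lt_irr => /(_ isT).
Qed.

Lemma count_lex_lt_gt t p :
  p \in t -> (count (lex_lt p) t + count (fun r => lex_lt r p) t < size t)%N.
Proof.
move=> t_p; set a1 := lex_lt p; set a2 := fun r => lex_lt r p.
have no_both : count (predI a1 a2) t = 0%N.
  rewrite (eq_count (a2 := pred0)) ?count_pred0 // => q /=.
  by rewrite /a1 /a2; apply/negbTE/andP=> -[/lex_lt_asym->].
rewrite -count_predUI no_both addn0 -(count_predC (predU a1 a2) t).
rewrite -[X in (X < _)%N]addn0 ltn_add2l -has_count.
by apply/hasP; exists p; rewrite //= /a1 /a2 lex_lt_irr.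
Qed.

Lemma count_lex_lt_mono t p q : uniq t -> p \in t -> lex_lt p q ->
  (count (fun r => lex_lt r p) t < count (fun r => lex_lt r q) t)%N.
Proof.
move=> uniq_t t_p pq; rewrite -!size_filter.
apply: (@uniq_leq_size _ (p :: _)) => [|r].
  by rewrite /= filter_uniq // mem_filter lex_lt_irr.
rewrite in_cons !mem_filter => /predU1P[->|/andP[rp ->]]; first by rewrite pq.
by rewrite (lex_lt_trans rp pq).
Qed.

Lemma count_lex_lt_inj t p q : uniq t -> p \in t -> q \in t ->
  count (fun r => lex_lt r p) t = count (fun r => lex_lt r q) t -> p = q.
Proof.
move=> uniq_t t_p t_q eq_count; apply/eqP; apply: contraT => /lex_lt_total/orP[].
  by move/(count_lex_lt_mono uniq_t t_p); rewrite eq_count ltnn.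
by move/(count_lex_lt_mono uniq_t t_q); rewrite eq_count ltnn.
Qed.
End LexOrder.

Section Pi.
Context (d : Order.disp_t) (T : finPOrderType d) (R : realFieldType) (tau eta : T -> R).
Implicit Types (m : T) (A B C D X M I : {set T}).
Local Open Scope ring_scope.
Local Notation phi := (phi tau eta).
Local Notation pi X := (pi_poly tau eta setT X).
Local Notation Theta := (Theta tau eta).

Definition pi_jump m : R := (1 + eta m) * \prod_(i in downset m :\ m) tau i.

Lemma coef_pi X k :
  (pi X)`_k = \sum_(I | downclosed_in setT I && (#|I| == k)) phi X I.
Proof.
rewrite /pi_poly coef_sum [RHS]big_mkcondr /=; apply: eq_bigr => I _.
by rewrite coefZ coefXn eq_sym; case: eqP; rewrite ?mulr1 ?mulr0.
Qed.

Lemma phi_setU1_notin X m I : m \notin I -> phi (m |: X) I = phi X I.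
Proof.
move=> mNI; have eq_I : I :&: (m |: X) = I :&: X.
  by apply/setP=> z; rewrite !inE; case: eqP => // ->; rewrite (negPf mNI).
have eq_max : Defs.maxset I :\: (m |: X) = Defs.maxset I :\: X.
  apply/setP=> z; rewrite !inE; case: eqP => // ->.
  by rewrite (negPf mNI) !andbF.
by rewrite /Defs.phi eq_I eq_max.
Qed.

Lemma phi_downset_setU1 X m : upclosed X -> m \notin X ->
  phi X (downset m) - phi (m |: X) (downset m) = pi_jump m.
Proof.
move=> /upclosedP uX mNX.
have below_m_out z : (z <= m)%O -> (z \in X) = false.
  by move=> zm; apply/negbTE; apply: contra mNX => /uX; apply.
have capX : downset m :&: X = set0.
  by apply/setP=> z; rewrite !inE; apply/negbTE/andP=> -[/below_m_out->].
have capmX : downset m :&: (m |: X) = [set m].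
  apply/setP=> z; rewrite !inE; case: (eqVneq z m) => [->|_]; first by rewrite lexx.
  by apply/negbTE/andP=> -[/below_m_out->].
have mDX : [set m] :\: X = [set m] by apply/setDidPl; rewrite disjoints1.
have mDmX : [set m] :\: (m |: X) = set0.
  by apply/setP=> z; rewrite !inE; case: (z == m); rewrite ?andbF.
rewrite /Defs.phi maxset_downset capX capmX mDX mDmX sub0set subxx cards0 cards1.
rewrite big_set1 big_set0 /pi_jump; ring.
Qed.

Lemma coef_pi_setU1 X m k : upclosed X -> m \notin X -> (k <= #|downset m|)%N ->
  (pi X - pi (m |: X))`_k = if k == #|downset m| then pi_jump m else 0.
Proof.
move=> uX mNX le_k; rewrite coefB !coef_pi -sumrB.
have phi_eq I : downclosed_in setT I -> #|I| = k -> I != downset m ->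
    phi X I - phi (m |: X) I = 0.
  move=> dI card_I; apply: contraNeq => /eqP neq_phi.
  have mI : m \in I.
    by apply/negPn/negP=> mNI; apply: neq_phi; rewrite phi_setU1_notin ?subrr.
  by rewrite eq_sym eqEcard downset_sub //= card_I.
case: eqP => [eq_k|neq_k]; last first.
  apply: big1 => I /andP[dI /eqP card_I]; apply: phi_eq => //.
  by apply/eqP=> eq_I; apply: neq_k; rewrite -card_I eq_I.
rewrite (bigD1 (downset m)) /=; last by rewrite downclosed_downset eq_k eqxx.
rewrite phi_downset_setU1 // big1 ?addr0 // => I /andP[/andP[dI /eqP card_I]].
exact: phi_eq.
Qed.

Hypotheses (tau_gt0 : forall i, 0 < tau i) (eta_gtN1 : forall i, -1 < eta i).

Lemma pi_jump_gt0 m : 0 < pi_jump m.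
Proof. by rewrite mulr_gt0 ?prodr_gt0 // addrC -[1]opprK subr_gt0. Qed.

Lemma lex_lt_pi_setU1 X m : upclosed X -> m \notin X -> lex_lt (pi (m |: X)) (pi X).
Proof.
move=> uX mNX; apply/lex_ltP; exists #|downset m|; split=> [i lt_i|].
  apply/eqP; rewrite eq_sym -subr_eq0 -coefB coef_pi_setU1 ?(ltnW lt_i) //.
  by rewrite (ltn_eqF lt_i).
by rewrite -subr_gt0 -coefB coef_pi_setU1 // eqxx pi_jump_gt0.
Qed.

Lemma mem_Theta p : reflect (exists2 M, upclosed M & p = pi M) (p \in Theta).
Proof.
rewrite mem_undup; apply: (iffP mapP) => [[M] | [M uM ->]].
  by rewrite mem_enum => uM ->; exists M.
by exists M; rewrite ?mem_enum.
Qed.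

Lemma pi_in_Theta M : upclosed M -> pi M \in Theta.
Proof. by move=> uM; apply/mem_Theta; exists M. Qed.

Lemma uniq_Theta : uniq Theta.
Proof. exact: undup_uniq. Qed.

Lemma lex_lt_pi_upchain A B i j : upclosed A -> upclosed B ->
  (i < j <= #|B :\: A|)%N -> lex_lt (pi (upchain A B j)) (pi (upchain A B i)).
Proof.
move=> uA uB; elim: j => // j IH /andP[lt_ij lt_j].
have [m mN ->] := upchainS lt_j.
have lt_j_i := lex_lt_pi_setU1 (upchain_upclosed j uA uB) mN.
move: lt_ij; rewrite ltnS leq_eqVlt => /orP[/eqP->//|lt_ij].
by apply: lex_lt_trans lt_j_i (IH _); rewrite lt_ij (ltnW lt_j).
Qed.

Lemma card_le_count_lex_gt C :
  upclosed C -> (#|C| <= count (lex_lt (pi C)) Theta)%N.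
Proof.
move=> uC; have card_C : #|C :\: set0| = #|C| by rewrite setD0.
rewrite -size_filter.
apply: (@lex_chain_leq_size _ (fun i => pi (upchain set0 C i))) => [i j|i lt_i].
  rewrite -card_C => /andP[lt_ij lt_j].
  by rewrite lex_lt_pi_upchain ?upclosed0 // lt_ij ltnW.
rewrite mem_filter -{1}(upchain_full (sub0set C)).
rewrite lex_lt_pi_upchain ?upclosed0 ?card_C ?lt_i //=.
by rewrite pi_in_Theta ?upchain_upclosed ?upclosed0.
Qed.

Lemma card_le_count_lex_lt D :
  upclosed D -> (#|~: D| <= count (fun q => lex_lt q (pi D)) Theta)%N.
Proof.
move=> uD; rewrite -setTD -size_filter.
apply: (@lex_chain_leq_size _ (fun i => pi (upchain D setT i.+1))) => [i j|i lt_i].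
  by move=> /andP[lt_ij lt_j]; rewrite lex_lt_pi_upchain ?upclosedT // ltnS lt_ij lt_j.
rewrite mem_filter -[in X in lex_lt _ X](upchain0 D setT).
rewrite lex_lt_pi_upchain ?upclosedT //=.
by rewrite pi_in_Theta ?upchain_upclosed ?upclosedT.
Qed.

Lemma card_lt_size_Theta : (#|T| < size Theta)%N.
Proof.
have := count_lex_lt_gt (pi_in_Theta (upclosedT T)).
have := card_le_count_lex_gt (upclosedT T); rewrite cardsT => le_T_count lt_count.
exact: leq_ltn_trans le_T_count (leq_ltn_trans (leq_addr _ _) lt_count).
Qed.

Section SmallTheta.
Hypothesis size_Theta : size Theta = #|T|.+1.

Lemma count_lex_lt_pi C : upclosed C -> count (fun q => lex_lt q (pi C)) Theta = #|~: C|.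
Proof.
move=> uC; have := count_lex_lt_gt (pi_in_Theta uC); rewrite size_Theta -(cardsC C).
by have := card_le_count_lex_gt uC; have := card_le_count_lex_lt uC; lia.
Qed.

Lemma pi_eq_card C D : upclosed C -> upclosed D -> pi C = pi D <-> #|C| = #|D|.
Proof.
move=> uC uD; have := cardsC D; rewrite -(cardsC C).
have count_C := count_lex_lt_pi uC; have count_D := count_lex_lt_pi uD.
split=> [eq_pi|eq_card]; first by rewrite eq_pi count_D in count_C; lia.
apply: (count_lex_lt_inj uniq_Theta (pi_in_Theta uC) (pi_in_Theta uD)).
by rewrite count_C count_D; lia.
Qed.
End SmallTheta.

Section CardDetermined.
Hypothesis pi_card :
  forall C D, upclosed C -> upclosed D -> #|C| = #|D| -> pi C = pi D.

Lemma size_Theta_le : (size Theta <= #|T|.+1)%N.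
Proof.
rewrite -(size_iota 0 #|T|.+1) -(size_map (fun i => pi (upchain set0 setT i))).
apply: uniq_leq_size uniq_Theta _ => _ /mem_Theta[M uM ->].
have le_M : (#|M| <= #|[set: T] :\: set0|)%N by rewrite setD0 cardsT max_card.
apply/mapP; exists #|M|; first by rewrite mem_iota ltnS max_card.
by apply: pi_card; rewrite ?upchain_upclosed ?upclosed0 ?upclosedT // card_upchain // cards0.
Qed.

Lemma pi_jump_eq X X' m m' : upclosed X -> upclosed X' -> m \notin X -> m' \notin X' ->
  upclosed (m |: X) -> upclosed (m' |: X') -> #|X| = #|X'| ->
  #|downset m| = #|downset m'| /\ pi_jump m = pi_jump m'.
Proof.
move=> uX uX' mNX mNX' umX umX' eq_card.
have eq_diff : pi X - pi (m |: X) = pi X' - pi (m' |: X').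
  by rewrite (pi_card uX uX') // (pi_card umX umX') // !cardsU1 mNX mNX' eq_card.
have coef_nz M n k : upclosed M -> n \notin M -> (k <= #|downset n|)%N ->
    ((pi M - pi (n |: M))`_k != 0) = (k == #|downset n|).
  move=> uM nNM le_k; rewrite coef_pi_setU1 //; case: ifP => _; rewrite ?eqxx //.
  by rewrite (lt0r_neq0 (pi_jump_gt0 n)).
have eq_downset : #|downset m| = #|downset m'|.
  apply/eqP; rewrite eqn_leq; apply/andP; split; rewrite leqNgt; apply/negP=> lt_dn.
    by have := coef_nz _ _ _ uX mNX (ltnW lt_dn); rewrite eq_diff coef_nz // eqxx (ltn_eqF lt_dn).
  by have := coef_nz _ _ _ uX' mNX' (ltnW lt_dn); rewrite -eq_diff coef_nz // eqxx (ltn_eqF lt_dn).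
split=> //; have := congr1 (fun p : {poly R} => p`_#|downset m|) eq_diff.
by rewrite /= !coef_pi_setU1 // -?eq_downset ?eqxx.
Qed.

Lemma pi_card_hierarchical : hierarchical T.
Proof.
(* A lower cover [w] of [v] with [len w >= len u] and the element [v] can both be
   added to up-sets of equal size, but [#|downset w| < #|downset v|]. *)
move=> u v le_len; apply: contraT => uNv.
have [w wv len_w] : exists2 w, (w < v)%O & (len w).+1 = len v.
  by apply: len_cover; have := len_gt0 u; lia.
have wNu : ~~ (w <= u)%O.
  apply/negP; rewrite le_eqVlt => /orP[/eqP eq_wu|/len_lt]; last by lia.
  by move: uNv; rewrite -eq_wu (ltW wv).
pose X' := ~: downset v; have uX' : upclosed X' := upclosedC_downset v.
have vNX' : v \notin X' by rewrite !inE lexx.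
have uvX' : upclosed (v |: X').
  by apply: upclosed_setU1 => // y vy; rewrite !inE lt_geF.
have wNvX' : w \notin v |: X' by rewrite !inE (lt_eqF wv) (ltW wv).
have above_w y : (w < y)%O -> y \in v |: X'.
  move=> wy; rewrite !inE; case: (eqVneq y v) => //= yNv; apply/negP=> yv.
  have yv' : (y < v)%O by rewrite lt_neqAle yNv.
  by have := len_lt wy; have := len_lt yv'; lia.
have [|z vX'z [uX uwX]] := upclosed_exchange uvX' wNvX' above_w.
  by exists u; rewrite // !inE uNv orbT.
have card_X : #|(v |: X') :\ z| = #|X'|.
  by have := cardsD1 z (v |: X'); rewrite vX'z cardsU1 vNX' => /addnI.
have wNX : w \notin (v |: X') :\ z by rewrite in_setD1 (negPf wNvX') andbF.
have [eq_dn _] := pi_jump_eq uX uX' wNX vNX' uwX uvX' card_X.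
suff /proper_card : downset w \proper downset v by rewrite eq_dn ltnn.
apply/properP; split; last by exists v; rewrite !inE ?lexx // lt_geF.
by apply/subsetP=> t /[!inE] /le_trans; apply; apply: ltW.
Qed.

Lemma pi_card_eta_len u v : len u = len v -> eta u = eta v.
Proof.
move=> eq_len; pose X := ~: downset u :&: ~: downset v.
have uX : upclosed X by apply: upclosedI; apply: upclosedC_downset.
have uaX a : len a = len u -> upclosed (a |: X).
  move=> len_a; apply: upclosed_setU1 uX _ => y /len_lt lt_ay.
  by rewrite !inE; apply/andP; split; apply/negP=> /len_le; lia.
have uNX : u \notin X by rewrite !inE lexx.
have vNX : v \notin X by rewrite !inE lexx andbF.
have [_] := pi_jump_eq uX uX uNX vNX (uaX u erefl) (uaX v (esym eq_len)) erefl.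
rewrite /pi_jump.
have -> : downset u :\ u = downset v :\ v.
  apply/setP=> z; rewrite !inE -!lt_neqAle.
  by rewrite !(hier_ltE pi_card_hierarchical) eq_len.
by move/(mulIf (lt0r_neq0 (prodr_gt0 _ (fun i _ => tau_gt0 i))))/addrI.
Qed.
End CardDetermined.
End Pi.

Section Hierarchical.
Context (d : Order.disp_t) (T : finPOrderType d) (R : realFieldType) (tau eta : T -> R).
Hypothesis hT : hierarchical T.
Implicit Types (u v x y z : T) (A B C D I : {set T}).
Local Open Scope ring_scope.
Local Notation pi X := (pi_poly tau eta setT X).

Lemma maxset_hier I :
  Defs.maxset I = [set y in I | [forall z in I, ~~ (len y < len z)%N]].
Proof.
apply/setP=> y; rewrite !inE; congr (_ && _); apply: eq_forallb_in => z _.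
rewrite hier_leE //; case: (eqVneq y z) => [->|yNz] /=; first by rewrite ltnn.
by rewrite implybF.
Qed.

Lemma nonmax_hier I : downclosed_in setT I ->
  I :\: Defs.maxset I = [set x | [exists z in I, (len x < len z)%N]].
Proof.
move=> /downclosedP dI; apply/setP=> x; rewrite maxset_hier !inE negb_and negb_forall_in.
case Ix: (x \in I); rewrite /= ?andbT ?andbF.
  by apply: eq_existsb => z; rewrite negbK.
apply/esym/negbTE/existsP=> -[z /andP[Iz lt_xz]].
by move: Ix; rewrite (dI z x Iz) // ltW // hier_ltE.
Qed.

Hypothesis eta_len : forall u v, len u = len v -> eta u = eta v.

Section LenPreservingPerm.
Variable s : {perm T}.
Hypothesis len_s : forall x, len (s x) = len x.

Let preimsetK A : (s^-1)%g @^-1: (s @^-1: A) = A.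
Proof. by apply/setP=> x; rewrite !inE permKV. Qed.

Let le_perm x y : (s x <= s y)%O = (x <= y)%O.
Proof. by rewrite !hier_leE // !len_s (inj_eq perm_inj). Qed.

Lemma subset_preimset_perm A B : (s @^-1: A \subset s @^-1: B) = (A \subset B).
Proof.
apply/idP/idP; last exact: preimsetS.
by move/(preimsetS (s^-1)%g); rewrite !preimsetK.
Qed.

Lemma upclosed_preimset_perm C : upclosed C -> upclosed (s @^-1: C).
Proof.
move=> /upclosedP uC; apply/upclosedP=> x y /[!inE] Csx xy.
by apply: uC Csx _; rewrite le_perm.
Qed.

Lemma downclosed_preimset_perm I :
  downclosed_in setT (s @^-1: I) = downclosed_in setT I.
Proof.
apply/downclosedP/downclosedP=> dI x y.
  by move=> Ix yx; have := dI (s^-1 x)%g (s^-1 y)%g; rewrite !inE -le_perm !permKV; apply.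
by rewrite !inE => Isx yx; apply: dI Isx _; rewrite le_perm.
Qed.

Lemma maxset_preimset_perm I : Defs.maxset (s @^-1: I) = s @^-1: Defs.maxset I.
Proof.
apply/setP=> y; rewrite !maxset_hier !inE; congr (_ && _).
apply/forall_inP/forall_inP=> max_y z; last by rewrite inE => /max_y; rewrite !len_s.
have len_sV x : len ((s^-1)%g x) = len x by rewrite -{2}(permKV s x) len_s.
by move=> Iz; have := max_y ((s^-1)%g z); rewrite inE permKV len_sV len_s => ->.
Qed.

Lemma prod_preimset_perm (F : T -> R) A :
  (forall x, F (s x) = F x) -> \prod_(i in s @^-1: A) F i = \prod_(i in A) F i.
Proof.
move=> F_s; rewrite [RHS](reindex_inj (@perm_inj _ s)).
by apply: eq_big => i; rewrite ?inE ?F_s.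
Qed.

Lemma phi_preimset_perm C I : downclosed_in setT I ->
  phi tau eta (s @^-1: C) (s @^-1: I) = phi tau eta C I.
Proof.
move=> dI; rewrite /Defs.phi maxset_preimset_perm -preimsetI subset_preimset_perm.
case: ifP => // _; rewrite (card_preimset _ (@perm_inj _ s)).
have -> : s @^-1: I :\: s @^-1: Defs.maxset I = I :\: Defs.maxset I.
  by rewrite -preimsetD nonmax_hier //; apply/setP=> x; rewrite !inE len_s.
by rewrite -preimsetD prod_preimset_perm // => x; apply/eta_len/len_s.
Qed.

Lemma pi_preimset_perm C : pi (s @^-1: C) = pi C.
Proof.
have preim_inj : injective (fun A : {set T} => s @^-1: A).
  by move=> A B /= eq_AB; rewrite -[A]preimsetK -[B]preimsetK eq_AB.
rewrite /pi_poly (reindex_inj preim_inj) /=; apply: eq_big => I.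
  by rewrite downclosed_preimset_perm.
rewrite downclosed_preimset_perm => dI; rewrite phi_preimset_perm //.
by congr (_ *: 'X^_); apply: card_preimset; apply: perm_inj.
Qed.
End LenPreservingPerm.

Lemma len_tperm u v : len u = len v -> forall x, len (tperm u v x) = len x.
Proof. by move=> eq_len x; case: tpermP => // ->. Qed.

Lemma len_eq_exchange C D u v : upclosed C -> upclosed D ->
  u \in C :\: D -> v \in D :\: C -> len u = len v.
Proof.
move=> /upclosedP uC /upclosedP uD /setDP[Cu Du] /setDP[Dv Cv].
case: (ltngtP (len u) (len v)) => // [lt_uv|lt_vu].
  by move: Cv; rewrite (uC u) // hT // addn1.
by move: Du; rewrite (uD v) // hT // addn1.
Qed.

Lemma hierarchical_pi_card C D : upclosed C -> upclosed D -> #|C| = #|D| -> pi C = pi D.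
Proof.
move=> + uD; move: {2}#|C :\: D| (erefl #|C :\: D|) => n.
elim: n C => [|n IH] C card_CD uC eq_CD.
  suff -> : C = D by [].
  by apply/eqP; rewrite eqEcard eq_CD leqnn andbT -setD_eq0 -cards_eq0 card_CD.
have [u CDu] : exists u, u \in C :\: D by apply/card_gt0P; rewrite card_CD.
have [v DCv] : exists v, v \in D :\: C.
  by apply/card_gt0P; rewrite cardsD setIC -eq_CD -cardsD card_CD.
have len_s := len_tperm (len_eq_exchange uC uD CDu DCv).
rewrite -(pi_preimset_perm len_s); apply: IH.
- apply/eqP; rewrite -eqSS -card_CD (cardsD1 u (C :\: D)) CDu eqSS; apply/eqP.
  move: CDu DCv; rewrite !inE => /andP[Du Cu] /andP[Cv Dv].
  apply: eq_card => x; rewrite !inE; case: tpermP => [->|->|/eqP xNu _].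
  + by rewrite (negPf Cv) eqxx andbF.
  + by rewrite Dv /= !andbF.
  + by rewrite xNu.
- exact: upclosed_preimset_perm.
- by rewrite (card_preimset _ (@perm_inj _ _)).
Qed.
End Hierarchical.

Local Open Scope ring_scope.

Theorem theorem3p5 (R : realFieldType) (d : Order.disp_t) (T : finPOrderType d)
    (tau eta : T -> R)
    (htau : forall i, 0 < tau i) (heta1 : forall i, -1 < eta i)
    (heta0 : forall i, eta i != 0) :
  (#|T|.+1 <= size (Theta tau eta))%N /\
  let P1 := size (Theta tau eta) = #|T|.+1 in
  let P2 := forall C D : {set T}, upclosed C -> upclosed D ->
              #|C| = #|D| -> pi_poly tau eta setT C = pi_poly tau eta setT D in
  let P3 := forall C D : {set T}, upclosed C -> upclosed D ->
              (pi_poly tau eta setT C = pi_poly tau eta setT D <-> #|C| = #|D|) in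
  let P4 := hierarchical T /\
              (forall u v : T, len u = len v -> eta u = eta v) in
  [/\ P1 <-> P2, P1 <-> P3 & P1 <-> P4].
Proof.
have size_gt := card_lt_size_Theta htau heta1.
split=> // P1 P2 P3 P4.
have P1_P3 : P1 -> P3 by move=> size_Theta C D; apply: pi_eq_card.
have P3_P2 : P3 -> P2 by move=> eq_card C D uC uD /eq_card; apply.
have P2_P1 : P2 -> P1.
  by move=> pi_card; apply/eqP; rewrite eqn_leq size_gt size_Theta_le.
have P2_P4 : P2 -> P4.
  move=> pi_card; split; first exact: pi_card_hierarchical pi_card.
  exact: pi_card_eta_len pi_card.
have P4_P2 : P4 -> P2 by case=> hT eta_len C D; apply: hierarchical_pi_card.
by split; split; tauto.
Qed.
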